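(* Let $X_t\subset X_{t+p}$ be finite simplicial complexes, let $\mathscr{S}_{t+p}$ be a cellular sheaf on $X_{t+p}$ whose stalks are finite-dimensional inner product spaces over $\mathbb{R}$ or $\mathbb{C}$, and let $\mathscr{S}_t$ be its pullback to $X_t$. Suppose each simplex of $X_{t+p}$ is oriented and the simplices of $X_t$ carry the same orientations. Then the spectrum of the persistent sheaf Laplacian $\Delta_q^{t,p}$ does not depend on the choice of orientations of the simplices of $X_{t+p}$ (with $X_t$ always carrying the inherited orientations).
   Context: A cellular sheaf assigns stalks $\mathscr{S}(\sigma)$ to simplices and linear restriction maps $\mathscr{S}_{\sigma\leqslant\tau}$ to face relations, functorially; the pullback $\mathscr{S}_t$ has the same stalks and restriction maps on $X_t$. $C^q(X;\mathscr{S})=\bigoplus_{\dim\sigma=q}\mathscr{S}(\sigma)$, distinct stalks orthogonal; $C^q(X_t;\mathscr{S}_t)$ is the subspace of $C^q(X_{t+p};\mathscr{S}_{t+p})$ spanned by stalks over simplices of $X_t$. The orientation determines signed incidence numbers: for $\tau=[v_0,\dots,v_n]$ and $\sigma=[v_0,\dots,\hat v_i,\dots,v_n]$, $[\sigma:\tau]=(-1)^i$ (or $(-1)^{i+1}$ if $\sigma$ is oppositely oriented), $0$ if $\sigma$ is not a codimension-one face. Coboundary $d_q|_{\mathscr{S}(\sigma)}=\sum_{\sigma\leqslant\tau}[\sigma:\tau]\mathscr{S}_{\sigma\leqslant\tau}$; $d^t,d^{t+p}$ denote those of the two complexes. Let $\mathbb{C}^{t,p}_{q+1}=\{e\in C^{q+1}(X_{t+p};\mathscr{S}_{t+p})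 : (d_q^{t+p})^*(e)\in C^q(X_t;\mathscr{S}_t)\}$, let $\eth_q^{t,p}:C^q(X_t;\mathscr{S}_t)\to\mathbb{C}^{t,p}_{q+1}$ be the adjoint of $(d_q^{t+p})^*|_{\mathbb{C}^{t,p}_{q+1}}$, and define $\Delta_q^{t,p}=(\eth_q^{t,p})^*\eth_q^{t,p}+d_{q-1}^t(d_{q-1}^t)^*$. *)

From HB Require Import structures.
From mathcomp Require Import all_boot all_order all_algebra.
Set Implicit Arguments. Unset Strict Implicit. Unset Printing Implicit Defensive.
Import Order.TTheory GRing.Theory Num.Theory.
Local Open Scope ring_scope.

Section PersistentSheafLaplacian.

(* scalar field F together with its conjugation cj (identity over the reals,
   complex conjugation over the complex numbers) *)
Variables (F : numFieldType) (cj : F -> F).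
Variable V : finType.

(* a simplex is a nonempty finite set of vertices; dim sigma = #|sigma| - 1 *)
Definition is_simplicial_complex (X : {set {set V}}) : Prop :=
  (forall s, s \in X -> s != set0) /\
  (forall s t, s \in X -> t != set0 -> t \subset s -> t \in X).

(* An orientation of a simplex is an ordering [v_0, ..., v_n] of its vertices
   (up to even permutations).  o s is the chosen ordering of s. *)
Definition is_orientation (X : {set {set V}}) (o : {set V} -> seq V) : Prop :=
  forall s, s \in X -> perm_eq (o s) (enum s).

(* number of inversions of a list w.r.t. a fixed reference order of V;
   two orderings of the same simplex define the same orientation iff
   their inversion numbers have the same parity *)
Fixpoint inversions (l : seq V) : nat :=
  match l with
  | [::] => 0
  | x :: l' => (count (fun y => enum_rank y < enum_rank x) l' + inversions l')%N
  end.

(* signed incidence number [s : t]: if t = [v_0,...,v_n] (its orientation o t)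
   and s = t \ {v_i}, then [s:t] = (-1)^i if o s is the same orientation as
   [v_0,..,^v_i,..,v_n] and (-1)^(i+1) otherwise; 0 if s is not a
   codimension-one face of t. *)
Definition incidence (o : {set V} -> seq V) (s t : {set V}) : F :=
  if (s \subset t) && (#|t| == #|s|.+1) then
    let l := o t in
    let i := find (fun x => x \notin s) l in
    let l' := filter (fun x => x \in s) l in
    (-1) ^+ (i + inversions l' + inversions (o s))
  else 0.

(* stalk over s : F^(d s) with its standard inner product;
   restriction map S_{s <= t} : F^(d s) -> F^(d t), as a matrix acting on
   column vectors *)
Variable d : {set V} -> nat.
Variable res : forall s t : {set V}, 'M[F]_(d t, d s).

Definition is_cellular_sheaf (X : {set {set V}}) : Prop :=
  (forall s, s \in X -> res s s = 1%:M) /\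
  (forall s t u, s \in X -> t \in X -> u \in X -> s \subset t -> t \subset u ->
     res s u = res t u *m res s t).

(* global index set: pairs (simplex s, coordinate of the stalk over s) *)
Definition idx := {s : {set V} & 'I_(d s)}.
Definition N := #|{: idx}|.
Definition ix (i : 'I_N) : idx := enum_val i.
Definition sx (i : 'I_N) : {set V} := tag (ix i).
Definition cx (i : 'I_N) : 'I_(d (sx i)) := tagged (ix i).

(* coordinate i belongs to C^k(X; S) *)
Definition inC (X : {set {set V}}) (k : nat) (i : 'I_N) : bool :=
  (sx i \in X) && (#|sx i| == k.+1).

Definition supported (P : 'I_N -> bool) (v : 'cV[F]_N) : Prop :=
  forall i, ~~ P i -> v i 0 = 0.

(* standard (sesquilinear) inner product; distinct stalks are orthogonal *)
Definition ip n (u v : 'cV[F]_n) : F := \sum_i u i 0 * cj (v i 0).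

Definition adj m n (A : 'M[F]_(m, n)) : 'M[F]_(n, m) := map_mx cj A^T.

(* coboundary d_k : C^k(X;S) -> C^(k+1)(X;S), extended by 0 to all of F^N *)
Definition cobound (o : {set V} -> seq V) (X : {set {set V}}) (k : nat)
  : 'M[F]_N :=
  \matrix_(j, i)
    if inC X k.+1 j && inC X k i && (sx i \subset sx j) then
      incidence o (sx i) (sx j) * res (sx i) (sx j) (cx j) (cx i)
    else 0.

(* d_(q-1), with d_(-1) = 0 *)
Definition cobound_prev o X (q : nat) : 'M[F]_N :=
  if q is q'.+1 then cobound o X q' else 0.

(* coordinates of C^q(X_t; S_t): the inclusion F^m -> F^N *)
Definition Cidx (Xt : {set {set V}}) q := [set i : 'I_N | inC Xt q i].
Definition dimC Xt q := #|Cidx Xt q|.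
Definition incl Xt q : 'M[F]_(N, dimC Xt q) :=
  \matrix_(i, k) (i == enum_val k)%:R.

(* membership in  C^{t,p}_{q+1} = { e in C^(q+1)(X_{t+p}) :
                                    (d_q^{t+p})^* e in C^q(X_t) } *)
Definition in_Ctp o (Xt X : {set {set V}}) q (e : 'cV[F]_N) : Prop :=
  supported (inC X q.+1) e /\ supported (inC Xt q) (adj (cobound o X q) *m e).

(* B represents eth_q^{t,p} : C^q(X_t) -> C^{t,p}_{q+1}, the adjoint of
   (d_q^{t+p})^* restricted to C^{t,p}_{q+1} *)
Definition is_eth o Xt X q (B : 'M[F]_(N, dimC Xt q)) : Prop :=
  (forall x, in_Ctp o Xt X q (B *m x)) /\
  (forall x e, in_Ctp o Xt X q e ->
     ip (B *m x) e = ip (incl Xt q *m x) (adj (cobound o X q) *m e)).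

(* Delta_q^{t,p} = (eth)^* eth + d^t_{q-1} (d^t_{q-1})^*  on C^q(X_t);
   (eth)^* is (d_q^{t+p})^* restricted to C^{t,p}_{q+1} *)
Definition pers_laplacian o Xt X q (B : 'M[F]_(N, dimC Xt q))
  : 'M[F]_(dimC Xt q) :=
  adj (incl Xt q) *m adj (cobound o X q) *m B
  + adj (incl Xt q) *m cobound_prev o Xt q *m adj (cobound_prev o Xt q)
      *m incl Xt q.

End PersistentSheafLaplacian.

Definition orientation_independence (F : numFieldType) (cj : F -> F) : Prop :=
  forall (V : finType) (Xt X : {set {set V}}) (q : nat)
         (d : {set V} -> nat) (res : forall s t : {set V}, 'M[F]_(d t, d s))
         (o1 o2 : {set V} -> seq V)
         (B1 B2 : 'M[F]_(N d, dimC d Xt q)),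
    is_simplicial_complex X -> is_simplicial_complex Xt -> Xt \subset X ->
    @is_cellular_sheaf F V d res X ->
    is_orientation X o1 -> is_orientation X o2 ->
    @is_eth F cj V d res o1 Xt X q B1 -> @is_eth F cj V d res o2 Xt X q B2 ->
    char_poly (@pers_laplacian F cj V d res o1 Xt X q B1)
      = char_poly (@pers_laplacian F cj V d res o2 Xt X q B2) /\
    (forall a, eigenvalue (@pers_laplacian F cj V d res o1 Xt X q B1) a =
               eigenvalue (@pers_laplacian F cj V d res o2 Xt X q B2) a).

From mathcomp Require Import all_boot all_order all_algebra zify.
Set Implicit Arguments. Unset Strict Implicit. Unset Printing Implicit Defensive.
Import Order.TTheory GRing.Theory Num.Theory.

(* Two orientations o1, o2 of a simplex s agree iff eps(s), the parity of the
   sum of their inversion numbers, is even.  Reorienting multiplies every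
   incidence number [s : t] by eps(s) eps(t), so the new coboundaries are
   D d D for the diagonal sign matrix D.  As D is a self-adjoint involution
   preserving every space of cochains supported on a set of simplices, D eth D'
   (D' the restriction of D to C^q(X_t)) satisfies the defining property of the
   new eth, which is unique because the inner product is definite.  Hence the
   new Laplacian is D' Delta D', similar to Delta since D' D' = 1. *)

Section Inversions.
Variable V : finType.

Lemma odd_inversions_rem (x : V) (l : seq V) : x \in l ->
  odd (index x l + inversions (rem x l))
  = odd (inversions l + count (fun y => enum_rank y < enum_rank x) l).
Proof.
elim: l => [//|a l IHl] /=; rewrite inE eq_sym /index /=.
case: eqP => [->|/eqP neq_ax] /= xl.
  by rewrite ltnn !add0n addnAC addnn oddD odd_double.
rewrite (permP (perm_to_rem xl) (fun y => enum_rank y < enum_rank a)) /=.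
have rank_neq : (enum_rank x < enum_rank a) (+) (enum_rank a < enum_rank x).
  by case: ltngtP => // /val_inj/enum_rank_inj eq_xa; rewrite eq_xa eqxx in neq_ax.
move: (IHl xl) rank_neq; rewrite /index !oddD !oddb.
by do 2!case: (_ < _); do 5!case: odd.
Qed.

Lemma odd_incidence_exponent (s t : {set V}) (x : V) (l : seq V) :
  perm_eq l (enum t) -> t :\: s = [set x] ->
  odd (find (fun y => y \notin s) l + inversions (filter (fun y => y \in s) l))
  = odd (inversions l + count (fun y => enum_rank y < enum_rank x) (enum t)).
Proof.
move=> perm_lt tDs; have mem_l y : (y \in l) = (y \in t) by rewrite (perm_mem perm_lt) mem_enum.
have in_s : {in l, forall y, (y \in s) = (y != x)}.
  by move=> y; rewrite mem_l -in_set1 -tDs inE => ->; rewrite andbT negbK.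
have xl : x \in l by rewrite mem_l; move: (set11 x); rewrite -tDs inE => /andP[].
rewrite (eq_in_find (a2 := pred1 x)); last by move=> y /in_s /= ->; rewrite negbK.
rewrite (eq_in_filter in_s) -rem_filter ?(perm_uniq perm_lt) ?enum_uniq //.
by rewrite -(permP perm_lt) odd_inversions_rem.
Qed.

End Inversions.

Local Open Scope ring_scope.

Definition reorient_parity (V : finType) (o1 o2 : {set V} -> seq V) (s : {set V}) : nat :=
  (inversions (o1 s) + inversions (o2 s))%N.

Lemma incidence_reorient (F : numFieldType) (V : finType) (o1 o2 : {set V} -> seq V)
    (s t : {set V}) :
  perm_eq (o1 t) (enum t) -> perm_eq (o2 t) (enum t) ->
  incidence F o2 s t = (-1) ^+ reorient_parity o1 o2 s * (-1) ^+ reorient_parity o1 o2 t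
                       * incidence F o1 s t.
Proof.
rewrite /incidence; case: ifP => [/andP[sub_st /eqP card_t] perm1 perm2|]; last by rewrite mulr0.
have [x tDs] : exists x, t :\: s = [set x].
  by apply/cards1P; rewrite cardsD (setIidPr sub_st) card_t subSnn.
pose c := count (fun y => enum_rank y < enum_rank x)%N (enum t).
have sign_face o : perm_eq (o t) (enum t) ->
    (-1) ^+ (find (fun y => y \notin s) (o t)
             + inversions (filter (fun y => y \in s) (o t)) + inversions (o s))
    = (-1) ^+ (inversions (o t) + c + inversions (o s)) :> F.
  by move=> perm_o; rewrite -signr_odd oddD (odd_incidence_exponent perm_o tDs) -oddD signr_odd.
rewrite (sign_face o1 perm1) (sign_face o2 perm2) /reorient_parity -!exprD.
set a1 := inversions (o1 s); set a2 := inversions (o2 s).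
set b1 := inversions (o1 t); set b2 := inversions (o2 t).
rewrite (_ : a1 + a2 + (b1 + b2) + (b1 + c + a1) = b2 + c + a2 + (a1 + b1) * 2)%N; last by lia.
by rewrite [RHS]exprD exprM sqrr_sign mulr1.
Qed.

Section SignMatrix.
Variables (F : numFieldType) (cj : F -> F).
Hypothesis cjN : {morph cj : x / - x}.

Definition sign_mx n (e : 'I_n -> nat) : 'M[F]_n := diag_mx (\row_i (-1) ^+ e i).

Lemma sign_mxK n (e : 'I_n -> nat) : sign_mx e *m sign_mx e = 1%:M.
Proof.
apply/matrixP => i j; rewrite mul_diag_mx !mxE.
by case: eqP => _; rewrite ?mulr0 // -expr2 sqrr_sign.
Qed.

Lemma sign_mxKl m n (e : 'I_n -> nat) (A : 'M[F]_(n, m)) :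
  sign_mx e *m (sign_mx e *m A) = A.
Proof. by rewrite mulmxA sign_mxK mul1mx. Qed.

Lemma sign_mxKr m n (e : 'I_n -> nat) (A : 'M[F]_(m, n)) :
  A *m sign_mx e *m sign_mx e = A.
Proof. by rewrite -mulmxA sign_mxK mulmx1. Qed.

Lemma conj_signM k y : cj ((-1) ^+ k * y) = (-1) ^+ k * cj y.
Proof. by rewrite -signr_odd; case: odd; rewrite ?mul1r // !mulN1r cjN. Qed.

Lemma adj_sign_mxl m n (e : 'I_n -> nat) (A : 'M[F]_(n, m)) :
  adj cj (sign_mx e *m A) = adj cj A *m sign_mx e.
Proof. by apply/matrixP => i j; rewrite mul_mx_diag mul_diag_mx !mxE conj_signM mulrC. Qed.

Lemma adj_sign_mxr m n (e : 'I_n -> nat) (A : 'M[F]_(m, n)) :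
  adj cj (A *m sign_mx e) = sign_mx e *m adj cj A.
Proof. by apply/matrixP => i j; rewrite mul_mx_diag mul_diag_mx !mxE mulrC conj_signM. Qed.

Lemma adj_sign_conj m n (e : 'I_m -> nat) (e' : 'I_n -> nat) (A : 'M[F]_(m, n)) :
  adj cj (sign_mx e *m A *m sign_mx e') = sign_mx e' *m adj cj A *m sign_mx e.
Proof. by rewrite adj_sign_mxr adj_sign_mxl mulmxA. Qed.

Lemma ip_sign_mx n (e : 'I_n -> nat) (u v : 'cV[F]_n) :
  ip cj (sign_mx e *m u) v = ip cj u (sign_mx e *m v).
Proof.
by apply: eq_bigr => i _; rewrite !mul_diag_mx !mxE conj_signM mulrCA mulrA.
Qed.

End SignMatrix.

Arguments sign_mx {F n} e.

Section Cochains.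
Variables (F : numFieldType) (V : finType) (d : {set V} -> nat).

Lemma supported_sign_mx (P : 'I_(N d) -> bool) e (v : 'cV[F]_(N d)) :
  supported P v -> supported P (sign_mx e *m v).
Proof. by move=> supp_v i /supp_v; rewrite mul_diag_mx mxE => ->; rewrite mulr0. Qed.

Lemma supportedB (P : 'I_(N d) -> bool) (u v : 'cV[F]_(N d)) :
  supported P u -> supported P v -> supported P (u - v).
Proof. by move=> supp_u supp_v i Pi; rewrite !mxE supp_u // supp_v // subr0. Qed.

Lemma sign_mx_incl Xt q (e : 'I_(N d) -> nat) :
  sign_mx e *m incl F d Xt q = incl F d Xt q *m sign_mx (fun k => e (enum_val k)).
Proof.
apply/matrixP => i k; rewrite mul_mx_diag mul_diag_mx !mxE.
by case: eqP => [->|_]; rewrite ?mulr1 ?mul1r ?mulr0 ?mul0r.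
Qed.

End Cochains.

Section Uniqueness.
Variables (F : numFieldType) (cj : F -> F).
Hypotheses (conj_norm_ge0 : forall x, 0 <= x * cj x)
           (conj_norm_eq0 : forall x, x * cj x = 0 -> x = 0).

Lemma ipBl n (u v w : 'cV[F]_n) : ip cj (u - v) w = ip cj u w - ip cj v w.
Proof. by rewrite /ip -sumrB; apply: eq_bigr => i _; rewrite !mxE mulrBl. Qed.

Lemma ip_eq0 n (w : 'cV[F]_n) : ip cj w w = 0 -> w = 0.
Proof.
move=> ww0; apply/colP => i; rewrite mxE.
exact/conj_norm_eq0/(psumr_eq0P (fun j _ => conj_norm_ge0 (w j 0)) ww0).
Qed.

Lemma is_eth_unique (V : finType) (d : {set V} -> nat)
    (res : forall s t : {set V}, 'M[F]_(d t, d s)) o Xt X q (B B' : 'M_(N d, dimC d Xt q)) :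
  is_eth cj res o X B -> is_eth cj res o X B' -> B = B'.
Proof.
move=> [in_B adj_B] [in_B' adj_B']; apply/matrixP => i k.
pose x : 'cV[F]_(dimC d Xt q) := delta_mx k 0.
pose w := B *m x - B' *m x.
have in_w : in_Ctp cj res o Xt X q w.
  split; first exact: supportedB (in_B _).1 (in_B' _).1.
  by rewrite mulmxBr; apply: supportedB; [exact: (in_B _).2 | exact: (in_B' _).2].
have /ip_eq0/colP/(_ i) : ip cj w w = 0 by rewrite {1}/w ipBl adj_B // adj_B' // subrr.
by rewrite /w /x -!colE !mxE => /subr0_eq.
Qed.

End Uniqueness.

Section Reorientation.
Variables (F : numFieldType) (cj : F -> F).
Hypothesis cjN : {morph cj : x / - x}.
Variables (V : finType) (d : {set V} -> nat) (res : forall s t : {set V}, 'M[F]_(d t, d s)).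
Variables (X : {set {set V}}) (o1 o2 : {set V} -> seq V).
Hypotheses (orient1 : is_orientation X o1) (orient2 : is_orientation X o2).

Definition reorient_mx : 'M[F]_(N d) := sign_mx (fun i => reorient_parity o1 o2 (sx i)).

Definition reorient_mx_on Xt q : 'M[F]_(dimC d Xt q) :=
  sign_mx (fun k => reorient_parity o1 o2 (sx (enum_val k))).

Lemma reorient_mx_incl Xt q :
  reorient_mx *m incl F d Xt q = incl F d Xt q *m reorient_mx_on Xt q.
Proof. exact: sign_mx_incl. Qed.

Lemma adj_incl_reorient_mx Xt q :
  adj cj (incl F d Xt q) *m reorient_mx = reorient_mx_on Xt q *m adj cj (incl F d Xt q).
Proof. by rewrite -adj_sign_mxl // reorient_mx_incl adj_sign_mxr. Qed.

Lemma cobound_reorient (Y : {set {set V}}) k : Y \subset X ->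
  cobound res o2 Y k = reorient_mx *m cobound res o1 Y k *m reorient_mx.
Proof.
move=> sub_YX; apply/matrixP => j i; rewrite mul_mx_diag mul_diag_mx !mxE.
case: ifP => [/andP[/andP[/andP[jY _] _] _]|_]; last by rewrite mulr0 mul0r.
have jX : sx j \in X := subsetP sub_YX _ jY.
by rewrite (incidence_reorient _ _ (orient1 jX) (orient2 jX)) [RHS]mulrC !mulrA.
Qed.

Lemma cobound_prev_reorient (Y : {set {set V}}) k : Y \subset X ->
  cobound_prev res o2 Y k = reorient_mx *m cobound_prev res o1 Y k *m reorient_mx.
Proof. by case: k => [|k] /= sub_YX; [rewrite mulmx0 mul0mx | exact: cobound_reorient]. Qed.

Lemma adj_cobound_reorient q :
  adj cj (cobound res o2 X q)
  = reorient_mx *m adj cj (cobound res o1 X q) *m reorient_mx.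
Proof. by rewrite cobound_reorient // adj_sign_conj. Qed.

Lemma is_eth_reorient Xt q (B : 'M[F]_(N d, dimC d Xt q)) :
  is_eth cj res o1 X B ->
  is_eth cj res o2 X (reorient_mx *m B *m reorient_mx_on Xt q).
Proof.
move=> [in_B adj_B]; split=> [x|x e [supp_e supp_adj_e]].
  rewrite -!mulmxA; split; first exact/supported_sign_mx/(in_B _).1.
  by rewrite adj_cobound_reorient -!mulmxA sign_mxKl; apply/supported_sign_mx/(in_B _).2.
have in_e : in_Ctp cj res o1 Xt X q (reorient_mx *m e).
  split; first exact: supported_sign_mx.
  move: supp_adj_e; rewrite adj_cobound_reorient -!mulmxA.
  by move/(supported_sign_mx (fun i => reorient_parity o1 o2 (sx i))); rewrite sign_mxKl.
rewrite -!mulmxA ip_sign_mx // adj_B // mulmxA -reorient_mx_incl -mulmxA ip_sign_mx //.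
by rewrite adj_cobound_reorient -!mulmxA.
Qed.

Lemma pers_laplacian_reorient Xt q (B : 'M[F]_(N d, dimC d Xt q)) : Xt \subset X ->
  pers_laplacian cj res o2 X (reorient_mx *m B *m reorient_mx_on Xt q)
  = reorient_mx_on Xt q *m pers_laplacian cj res o1 X B *m reorient_mx_on Xt q.
Proof.
move=> sub_XtX.
rewrite /pers_laplacian adj_cobound_reorient cobound_prev_reorient // adj_sign_conj //.
rewrite mulmxDr mulmxDl !mulmxA adj_incl_reorient_mx !sign_mxKr.
by rewrite -(mulmxA _ reorient_mx (incl _ _ _ _)) reorient_mx_incl !mulmxA.
Qed.

End Reorientation.

Lemma char_poly_conj (R : comNzRingType) n (P Q A : 'M[R]_n) :
  Q *m P = 1%:M -> char_poly (Q *m A *m P) = char_poly A.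
Proof.
rewrite /char_poly => QP1; pose P' := map_mx polyC P; pose Q' := map_mx polyC Q.
have QP1' : Q' *m P' = 1%:M by rewrite -map_mxM QP1 map_mx1.
have -> : char_poly_mx (Q *m A *m P) = Q' *m char_poly_mx A *m P'.
  by rewrite /char_poly_mx !map_mxM mulmxBr mulmxBl scalar_mxC -(mulmxA _ Q') QP1' mulmx1.
by rewrite !det_mulmx mulrAC -det_mulmx QP1' det1 mul1r.
Qed.

Lemma orientation_independence_conj (F : numFieldType) (cj : F -> F) :
  {morph cj : x / - x} ->
  (forall x, 0 <= x * cj x) -> (forall x, x * cj x = 0 -> x = 0) ->
  orientation_independence cj.
Proof.
move=> cjN norm_ge0 norm_eq0 V Xt X q d res o1 o2 B1 B2 _ _ sub_XtX _ or1 or2 eth1 eth2.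
have -> : B2 = reorient_mx F d o1 o2 *m B1 *m reorient_mx_on F d o1 o2 Xt q.
  exact/(is_eth_unique norm_ge0 norm_eq0 eth2)/is_eth_reorient.
rewrite pers_laplacian_reorient // char_poly_conj ?sign_mxK //.
by split=> // a; rewrite !eigenvalue_root_char char_poly_conj ?sign_mxK.
Qed.

Theorem mainTheorem4 :
  (forall R : realFieldType, orientation_independence (F := R) id) /\
  (forall C : numClosedFieldType, orientation_independence (F := C) Num.conj).
Proof.
split=> [R|C]; apply: orientation_independence_conj.
- by [].
- by move=> x; rewrite -expr2 sqr_ge0.
- by move=> x /eqP; rewrite mulf_eq0 orbb => /eqP.
- exact: rmorphN.
- exact: mul_conjC_ge0.
- by move=> x /eqP; rewrite mul_conjC_eq0 => /eqP.
Qed.
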